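(* Let $0<p<\infty$, $0<\alpha<\infty$, and let $\beta$ be a real number with $\beta p<-1$ such that $\nu:=-(\alpha+\beta+\frac1p)>0$. Let $K>1$ be sufficiently large, $\delta_n=K^{-n}$, $f_n(z)=\delta_n^\nu(1+\delta_n-z)^\beta$ for $z\in\mathbb{D}$, $n\ge1$, and $F(z)=\sum_{n=1}^\infty|f_n(z)|$. Then there is a constant $C$ such that $(1-r)^\alpha M_p(r,F)\le C$ for every $r\in[0,1)$.
   Context: $\mathbb{D}$ is the unit disk; $(1+\delta_n-z)^\beta$ uses the principal branch (note $\mathrm{Re}(1+\delta_n-z)>0$ on $\mathbb{D}$). For a function $F$ on $\mathbb{D}$, $M_p(r,F)=\left(\int_0^{2\pi}|F(re^{i\theta})|^p\frac{d\theta}{2\pi}\right)^{1/p}$. *)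

From HB Require Import structures.
From mathcomp Require Import all_boot all_order all_algebra.
From mathcomp Require Import all_classical all_reals all_analysis.
From mathcomp Require Import complex.
Set Implicit Arguments. Unset Strict Implicit. Unset Printing Implicit Defensive.
Import Order.TTheory GRing.Theory Num.Theory.
Import numFieldNormedType.Exports.
Local Open Scope classical_set_scope.
Local Open Scope ring_scope.
Local Open Scope complex_scope.

Section Defs.
Context {R : realType}.

Definition reC (w : R[i]) : R := let: a +i* _ := w in a.
Definition imC (w : R[i]) : R := let: _ +i* b := w in b.

Definition cabs (w : R[i]) : R := Num.sqrt (reC w ^+ 2 + imC w ^+ 2).

(* principal argument, with values in (-pi, pi] (and 0 at 0) *)
Definition carg (w : R[i]) : R :=
  let x := reC w in let y := imC w in
  if 0 < x then atan (y / x)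
  else if x < 0 then (if 0 <= y then atan (y / x) + pi else atan (y / x) - pi)
  else if 0 < y then pi / 2 else if y < 0 then - (pi / 2) else 0.

Definition cexp (w : R[i]) : R[i] :=
  (expR (reC w))%:C * (cos (imC w) +i* sin (imC w)).

Definition cLog (w : R[i]) : R[i] := ln (cabs w) +i* carg w.

Definition cpow (w : R[i]) (b : R) : R[i] := cexp (b%:C * cLog w).

Definition delta (K : R) (n : nat) : R := K ^- n.

Definition fn (K nu beta : R) (n : nat) (z : R[i]) : R[i] :=
  ((delta K n) `^ nu)%:C * cpow (1 + (delta K n)%:C - z) beta.

Definition Fsum (K nu beta : R) (z : R[i]) : \bar R :=
  (\sum_(1 <= n <oo) (cabs (fn K nu beta n z))%:E)%E.

Definition polar (r t : R) : R[i] := (r * cos t) +i* (r * sin t).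

Definition Mp (p r : R) (F : R[i] -> \bar R) : \bar R :=
  poweR ((((pi *+ 2)^-1)%:E *
     \int[@lebesgue_measure R]_(t in `[0%R, (pi *+ 2)%R]) poweR (F (polar r t)) p))%E
   (p^-1).

End Defs.

(* Since [0 < delta_n], [|1 + delta_n - z| >= max(delta_n, |1 - z|)], so with
   [u = |1 - z|] every term satisfies [|f_n z| <= delta_n^nu * max(delta_n, u)^beta].
   As [nu > 0] and [nu + beta < 0], these terms decay geometrically on both sides
   of the index where [delta_n] crosses [u], whence [F z <= C u^(nu + beta)] with
   [C] independent of [z].  On the circle [|z| = r] one has
   [|1 - z| >= c (1 - r + |t|)], so [F^p] is dominated by [(1 - r + |t|)^e] with
   [e = (nu + beta) p = -(alpha p + 1) < -1]; integrating in [t] gives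
   [M_p(r, F)^p <= C' (1 - r)^(-alpha p)]. *)

From HB Require Import structures.
From mathcomp Require Import all_boot all_order all_algebra.
From mathcomp Require Import all_classical all_reals all_analysis.
From mathcomp Require Import complex.
From mathcomp Require Import ring lra.
Import Order.TTheory GRing.Theory Num.Theory.
Import numFieldNormedType.Exports.
Local Open Scope ring_scope.
Local Open Scope classical_set_scope.

(* No measurability is needed: the integral of a nonnegative function is the
   supremum of the integrals of the simple functions below it. *)
Lemma ge0_le_integral_nomeas d (T : measurableType d) (R : realType)
    (mu : {measure set T -> \bar R}) (D : set T) (f g : T -> \bar R) :
  (forall x, D x -> (0 <= f x)%E) -> (forall x, D x -> (f x <= g x)%E) ->
  (\int[mu]_(x in D) f x <= \int[mu]_(x in D) g x)%E.
Proof.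
move=> f0 fg; rewrite (integral_mkcond D f) (integral_mkcond D g).
have f0' x : (0 <= (f \_ D) x)%E.
  by rewrite /patch; case: ifPn => // /[1!inE] /f0.
have g0' x : (0 <= (g \_ D) x)%E.
  by rewrite /patch; case: ifPn => // /[1!inE] Dx; rewrite (le_trans (f0 _ Dx)) ?fg.
rewrite !ge0_integralTE //; apply: ereal_sup_le => _ [h hf <-]; exists h => // x.
by apply: (le_trans (hf x)); rewrite /patch; case: ifPn => // /[1!inE] /fg.
Qed.

Lemma nneseries_le_bound (R : realType) (a : nat -> R) (m : nat) (M : R) :
  (forall n, 0 <= a n) -> (forall N, \sum_(m <= n < N) a n <= M) ->
  (\sum_(m <= n <oo) (a n)%:E <= M%:E)%E.
Proof.
move=> a0 aM; apply: lime_le.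
  by apply: is_cvg_nneseries => n _ _; rewrite lee_fin.
by near=> N; rewrite sumEFin lee_fin.
Unshelve. all: by end_near.
Qed.

Lemma ler_powRN (R : realType) (x y a : R) :
  0 < x -> x <= y -> 0 <= a -> y `^ (- a) <= x `^ (- a).
Proof.
move=> x0 xy a0; have y0 := lt_le_trans x0 xy.
rewrite !powRN lef_pV2 ?posrE ?powR_gt0 //.
by apply: (ge0_ler_powR a0) => //; rewrite nnegrE ltW.
Qed.

Section lacunary_sum.
Context {R : realType}.
Variables (K u nu beta : R).
Hypotheses (K1 : 1 < K) (u0 : 0 < u) (nu0 : 0 < nu) (theta_lt0 : nu + beta < 0).

Definition lacunary_term (d : R) := d `^ nu * Num.max d u `^ beta.

Let q := K `^ (- nu).
Let E := (1 - q)^-1.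
Let Kt := K `^ (- (nu + beta)).
Let D := (Kt - 1)^-1.

Definition lacunary_const := 1 + D + E.

(* Below [u] the terms [d `^ nu * u `^ beta] decay with ratio [q] as [d]
   decreases; above [u] the terms [d `^ (nu + beta)] grow with ratio [Kt]
   towards [u].  [tail_bound] sums both geometric tails. *)
Let tail_bound d :=
  if d <= u then E * (d `^ nu * u `^ beta)
  else lacunary_const * u `^ (nu + beta) - D * d `^ (nu + beta).

Let K0 : 0 < K. Proof. exact: lt_trans ltr01 K1. Qed.

Let gt1_powR a : 0 < a -> 1 < K `^ a.
Proof.
move=> a0; have := @gt0_ltr_powR R a a0 1 K.
by rewrite powR1; apply; rewrite ?nnegrE ?ler01 ?ltW.
Qed.

Let q_lt1 : q < 1.
Proof. by rewrite /q powRN invf_lt1 ?powR_gt0 ?gt1_powR. Qed.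

Let E_gt0 : 0 < E. Proof. by rewrite /E invr_gt0 subr_gt0. Qed.

Let D_gt0 : 0 < D.
Proof. by rewrite /D invr_gt0 subr_gt0 gt1_powR // oppr_gt0. Qed.

Let E_fix : 1 + E * q = E.
Proof. by rewrite /E; field; rewrite subr_eq0 gt_eqF. Qed.

Let D_fix : 1 + D = D * Kt.
Proof. by rewrite /D; field; rewrite subr_eq0 gt_eqF ?gt1_powR // oppr_gt0. Qed.

Lemma lacunary_const_gt0 : 0 < lacunary_const.
Proof. by rewrite /lacunary_const addr_gt0 // addr_gt0. Qed.

Let powR_divK d a : 0 < d -> (d / K) `^ a = d `^ a * K `^ (- a).
Proof. by move=> d0; rewrite powRM ?invr_ge0 ?ltW // -powR_inv1 ?ltW // -powRrM mulN1r. Qed.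

Let powR_nu_beta d : 0 < d -> d `^ nu * d `^ beta = d `^ (nu + beta).
Proof. by move=> d0; rewrite powRD // (gt_eqF d0) implybT. Qed.

Let small_term_le d : 0 < d -> d <= u -> d `^ nu * u `^ beta <= u `^ (nu + beta).
Proof.
move=> d0 du; rewrite -powR_nu_beta // ler_wpM2r ?powR_ge0 //.
by apply: (ge0_ler_powR (ltW nu0)) => //; rewrite nnegrE ltW.
Qed.

Let tail_bound_ge0 d : 0 < d -> 0 <= tail_bound d.
Proof.
move=> d0; rewrite /tail_bound; case: ifPn => [_|/negbTE du].
  by rewrite mulr_ge0 ?mulr_ge0 ?powR_ge0 ?ltW.
have ud : u < d by rewrite ltNge du.
rewrite subr_ge0 (@le_trans _ _ (lacunary_const * d `^ (nu + beta))) //.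
  by rewrite ler_wpM2r ?powR_ge0 // /lacunary_const; have := E_gt0; lra.
rewrite ler_wpM2l ?(ltW lacunary_const_gt0) //.
by rewrite -[nu + beta]opprK; apply: ler_powRN; rewrite // ?oppr_ge0 ltW.
Qed.

Let tail_bound_step d : 0 < d -> lacunary_term d + tail_bound (d / K) <= tail_bound d.
Proof.
move=> d0; have dK0 : 0 < d / K by rewrite divr_gt0.
have dKd : d / K < d by rewrite ltr_pdivrMr // ltr_pMr.
rewrite /tail_bound /lacunary_term /=.
have [du|ud] := leP d u.
  rewrite (le_trans (ltW dKd) du) powR_divK // -/q.
  by rewrite -[in leRHS]E_fix le_eqVlt; apply/predU1P; left; ring.
rewrite powR_nu_beta //.
have [dKu|udK] := leP (d / K) u.
  have h1 : E * ((d / K) `^ nu * u `^ beta) <= E * u `^ (nu + beta).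
    by rewrite ler_wpM2l ?(ltW E_gt0) ?small_term_le.
  have h2 : d `^ (nu + beta) <= u `^ (nu + beta).
    by rewrite -[nu + beta]opprK; apply: ler_powRN; rewrite // ?oppr_ge0 ltW.
  have h3 : D * d `^ (nu + beta) <= D * u `^ (nu + beta) by rewrite ler_wpM2l ?(ltW D_gt0).
  rewrite /lacunary_const; lra.
rewrite powR_divK // -/Kt le_eqVlt; apply/predU1P; left.
by rewrite mulrA mulrAC -D_fix; ring.
Qed.

Let sum_lacunary_term_le N d :
  0 < d -> \sum_(k < N) lacunary_term (d / K ^+ k) <= tail_bound d.
Proof.
elim: N d => [|N IH] d d0; first by rewrite big_ord0 tail_bound_ge0.
rewrite big_ord_recl expr0 divr1.
under eq_bigr do rewrite exprS invfM mulrA.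
by apply: le_trans _ (tail_bound_step _ d0); rewrite lerD2l IH ?divr_gt0.
Qed.

Lemma lacunary_sum_le N :
  \sum_(1 <= n < N) lacunary_term (K ^- n) <= lacunary_const * u `^ (nu + beta).
Proof.
have C0 := ltW lacunary_const_gt0.
case: N => [|N]; first by rewrite big_geq // mulr_ge0 ?powR_ge0.
rewrite big_add1 /= big_mkord.
under eq_bigr do rewrite exprS invfM.
have Kinv0 : 0 < K^-1 by rewrite invr_gt0.
apply: le_trans (sum_lacunary_term_le N _ Kinv0) _.
rewrite /tail_bound; case: ifPn => Ku; last first.
  by rewrite gerBl mulr_ge0 ?powR_ge0 ?(ltW D_gt0).
apply: (@le_trans _ _ (E * u `^ (nu + beta))).
  by rewrite ler_wpM2l ?(ltW E_gt0) ?small_term_le.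
by rewrite ler_wpM2r ?powR_ge0 // /lacunary_const; have := D_gt0; lra.
Qed.

End lacunary_sum.

Section trig.
Context {R : realType}.
Implicit Types (t x y : R).

Lemma xcos_le_sin x : 0 <= x <= 1 -> x * cos x <= sin x.
Proof.
move=> /andP[x0 x1].
pose h : R -> R := sin - id * cos.
have dh (y : R) : is_derive y 1 h (y * sin y).
  have -> : y * sin y = cos y - (y *: - sin y + cos y *: 1).
    by rewrite /GRing.scale /=; ring.
  exact: is_deriveB.
have hc : {within `[0, 1], continuous h}.
  by apply: derivable_within_continuous => y _; exact: ex_derive.
have : h 0 <= h x.
  apply: (@ger0_derive1_le_cc R h 0 1 _ _ hc) => //; rewrite ?in_itv /= ?lexx ?ler01 ?x0 //.
  move=> y; rewrite in_itv /= => /andP[y0 y1].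
  rewrite derive1E derive_val mulr_ge0 ?ltW // sin_gt0_pi // y0 /=.
  by have := pi_ge2 R; lra.
by rewrite /h !fctE sin0 mul0r subr0 subr_ge0.
Qed.

Lemma cos_le_cos x y : 0 <= x -> x <= y -> y <= pi -> cos y <= cos x.
Proof.
move=> x0 xy ypi.
by rewrite leNgt ltr_cos ?in_itv /= ?x0 ?(le_trans x0 xy) ?(le_trans xy ypi) // -leNgt.
Qed.

Lemma one_sub_cos_ge t : 0 <= t <= pi -> cos 1 ^+ 2 / 16 * t ^+ 2 <= 1 - cos t.
Proof.
move=> /andP[t0 tpi].
have pi4 : pi < 4 :> R by have := pihalf_lt2 R; lra.
have c1_gt0 := cos1_gt0 R.
have c1_le1 : cos (1 : R) ^+ 2 <= 1 by rewrite expr_le1 ?cos_le1 // ltW.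
have [t2|t2] := leP t 2.
  pose x := t / 2; have x01 : 0 <= x <= 1 by apply/andP; split; rewrite /x; lra.
  have cos_x : cos 1 <= cos x.
    by case/andP: x01 => x0 x1; rewrite cos_le_cos //; have := pi_ge2 R; lra.
  have sin_x : x * cos 1 <= sin x.
    by apply: le_trans (xcos_le_sin _ x01); rewrite ler_wpM2l //; case/andP: x01.
  have xc0 : 0 <= x * cos 1 by case/andP: x01 => x0 _; rewrite mulr_ge0 // ltW.
  have sqr_sin_x : (x * cos 1) ^+ 2 <= sin x ^+ 2.
    by rewrite ler_pXn2r ?nnegrE // (le_trans xc0 sin_x).
  have -> : 1 - cos t = 2 * sin x ^+ 2.
    by rewrite -[t](@divfK _ 2) // -/x mulr_natr cos_mulr2n cos2sin2; ring.
  have : 0 <= x ^+ 2 * cos 1 ^+ 2 by rewrite mulr_ge0 ?sqr_ge0.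
  have -> : t = 2 * x by rewrite /x; field.
  by move: sqr_sin_x; rewrite exprMn; nra.
have cos_t : cos t <= cos 2 by rewrite cos_le_cos // ltW.
have := cos2_lt0 R.
have : t ^+ 2 <= 4 ^+ 2 by rewrite ler_pXn2r ?nnegrE //; lra.
nra.
Qed.

End trig.

Section power_integral.
Context {R : realType}.
Implicit Types (a c x : R).

Lemma is_derive_powR_addl c a x : 0 < c + x ->
  is_derive x 1 (fun t => (c + t) `^ a) (a * (c + x) `^ (a - 1)).
Proof.
move=> cx; have := is_derive1_comp (is_derive1_powR a cx)
  (is_deriveD (is_derive_cst c x 1) (is_derive_id x 1)).
by rewrite add0r mulr1.
Qed.

Lemma is_derive_powR_subl c a x : 0 < c - x ->
  is_derive x 1 (fun t => (c - t) `^ a) (- (a * (c - x) `^ (a - 1))).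
Proof.
move=> cx; have := is_derive1_comp (g := fun t => c - t) (x := x) (is_derive1_powR a cx)
  (is_deriveB (is_derive_cst c x 1) (is_derive_id x 1)).
by rewrite sub0r mulrN1.
Qed.

Lemma continuous_FTC2_cc (f F : R -> R) a b : a < b ->
  {within `[a, b], continuous f} ->
  (forall x, a <= x <= b -> is_derive x 1 F (f x)) ->
  (\int[@lebesgue_measure R]_(x in `[a, b]) (f x)%:E = (F b - F a)%:E)%E.
Proof.
move=> ab cf dF.
have dFx x : a <= x <= b -> derivable F x 1 by move=> /dF ?; exact: ex_derive.
rewrite EFinB (@continuous_FTC2 _ f F a b ab cf) //.
- split.
  + by move=> x; rewrite in_itv /= => /andP[/ltW ax /ltW xb]; apply: dFx; rewrite ax xb.
  + apply: cvg_at_right_filter; apply: differentiable_continuous.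
    by apply/derivable1_diffP; apply: dFx; rewrite lexx ltW.
  + apply: cvg_at_left_filter; apply: differentiable_continuous.
    by apply/derivable1_diffP; apply: dFx; rewrite lexx ltW.
- move=> x; rewrite in_itv /= => /andP[/ltW ax /ltW xb].
  have /dF ? : a <= x <= b by rewrite ax xb.
  by rewrite derive1E derive_val.
Qed.

Lemma integral_powR_pair_le (A s L e : R) : 0 <= A -> 0 < s -> 0 < L -> e < -1 ->
  (\int[@lebesgue_measure R]_(t in `[0%R, L]) (A * ((s + t) `^ e + (s + L - t) `^ e))%:E
   <= (A * (2 / - (e + 1)) * s `^ (e + 1))%:E)%E.
Proof.
move=> A0 s0 L0 e1.
pose f t := A * ((s + t) `^ e + (s + L - t) `^ e).
pose F := (A / (e + 1)) \*: ((fun t => (s + t) `^ (e + 1)) - (fun t => (s + L - t) `^ (e + 1))).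
have dF x : 0 <= x <= L -> is_derive x 1 F (f x).
  move=> /andP[x0 xL].
  have sx : 0 < s + x by lra.
  have sLx : 0 < s + L - x by lra.
  have := is_deriveZ (A / (e + 1))
    (is_deriveB (is_derive_powR_addl _ (e + 1) _ sx) (is_derive_powR_subl _ (e + 1) _ sLx)).
  rewrite addrK /f /GRing.scale /=.
  by congr is_derive; field; rewrite addr_eq0; lra.
have df x : 0 <= x <= L -> derivable f x 1.
  move=> /andP[x0 xL].
  have sx : 0 < s + x by lra.
  have sLx : 0 < s + L - x by lra.
  have := is_deriveZ A (is_deriveD (is_derive_powR_addl _ e _ sx) (is_derive_powR_subl _ e _ sLx)).
  by move=> ?; exact: ex_derive.
rewrite (@continuous_FTC2_cc f F) //; last first.
  by apply: derivable_within_continuous => x; rewrite in_itv /= => /df.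
rewrite lee_fin /F !fctE /= /GRing.scale /= addr0 subr0 addrK.
have P0 : 0 <= (s + L) `^ (e + 1) := powR_ge0 _ _.
have k0 : 0 <= A / - (e + 1) by rewrite divr_ge0 //; lra.
have -> : A / (e + 1) * ((s + L) `^ (e + 1) - s `^ (e + 1)) -
          A / (e + 1) * (s `^ (e + 1) - (s + L) `^ (e + 1)) =
          A * (2 / - (e + 1)) * s `^ (e + 1) - 2 * (A / - (e + 1)) * (s + L) `^ (e + 1).
  by field; rewrite addr_eq0; lra.
by rewrite gerBl mulr_ge0 // mulr_ge0.
Qed.

End power_integral.

Section modulus.
Context {R : realType}.
Local Open Scope complex_scope.
Implicit Types (a b d r t : R) (w z : R[i]).

Lemma cabs_ge0 w : 0 <= cabs w.
Proof. exact: sqrtr_ge0. Qed.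

Lemma cabs_cexp z : cabs (cexp z) = expR (reC z).
Proof.
case: z => x y; rewrite /cabs /cexp /= !mul0r !subr0 !addr0 !exprMn -mulrDr.
by rewrite cos2Dsin2 mulr1 sqrtr_sqr ger0_norm ?expR_ge0.
Qed.

Lemma cabs_cpow w b : cabs (cpow w b) = expR (b * ln (cabs w)).
Proof. by rewrite /cpow cabs_cexp /= mul0r subr0. Qed.

Lemma cabs_mul_real a w : 0 <= a -> cabs (a%:C * w) = a * cabs w.
Proof.
case: w => x y a0; rewrite /cabs /= !mul0r subr0 addr0 !exprMn -mulrDr.
by rewrite sqrtrM ?sqr_ge0 // sqrtr_sqr ger0_norm.
Qed.

Lemma cabs_fn (K nu beta : R) n z :
  cabs (fn K nu beta n z) =
  delta K n `^ nu * expR (beta * ln (cabs (1 + (delta K n)%:C - z))).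
Proof. by rewrite /fn cabs_mul_real ?powR_ge0 // cabs_cpow. Qed.

Lemma cabs_1_sub_polar r t :
  cabs (1 - polar r t) = Num.sqrt ((1 - r) ^+ 2 + 2 * r * (1 - cos t)).
Proof.
rewrite /cabs /= sub0r sqrrN; congr Num.sqrt.
by rewrite exprMn sin2cos2; ring.
Qed.

Lemma cabs_1_addC_sub_polar d r t : 0 <= d -> 0 <= r <= 1 ->
  Num.max d (cabs (1 - polar r t)) <= cabs (1 + d%:C - polar r t).
Proof.
move=> d0 /andP[r0 r1]; rewrite /cabs /= addr0 !sub0r !sqrrN ge_max.
have rc : r * cos t <= 1 by rewrite (le_trans _ r1) // ler_piMr // cos_le1.
have le_sq : (1 - r * cos t) ^+ 2 <= (1 + d - r * cos t) ^+ 2.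
  by rewrite ler_pXn2r ?nnegrE //; lra.
apply/andP; split.
  rewrite -[leLHS]ger0_norm // -sqrtr_sqr ler_sqrt ?addr_ge0 ?sqr_ge0 //.
  have : d ^+ 2 <= (1 + d - r * cos t) ^+ 2 by rewrite ler_pXn2r ?nnegrE //; lra.
  by have := sqr_ge0 (r * sin t); lra.
by rewrite ler_sqrt ?addr_ge0 ?sqr_ge0 // lerD2r.
Qed.

Lemma cabs_1_sub_polar_ge r t : 0 <= r < 1 -> 0 <= t <= pi *+ 2 ->
  cos 1 / 10 * (1 - r + Num.min t (pi *+ 2 - t)) <= cabs (1 - polar r t).
Proof.
move=> /andP[r0 r1] /andP[t0 t2pi].
have pi4 : pi < 4 :> R by have := pihalf_lt2 R; lra.
set m := Num.min t (pi *+ 2 - t).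
have m_in : 0 <= m <= pi.
  by rewrite /m -mulr_natr in t2pi *; case: (leP t (pi * 2 - t)) => h; apply/andP; split; lra.
have cos_m : cos m = cos t.
  by rewrite /m; case: (leP t _) => // _; rewrite cosB cos2pi sin2pi mul1r mul0r addr0.
have := one_sub_cos_ge _ m_in; rewrite cos_m cabs_1_sub_polar.
have c1_gt0 := cos1_gt0 R.
have C_le1 : cos (1 : R) ^+ 2 <= 1 by rewrite expr_le1 ?cos_le1 // ltW.
have k0 : 0 <= 1 - cos t by rewrite subr_ge0 cos_le1.
case/andP: m_in => m0 mpi.
have lhs0 : 0 <= cos 1 / 10 * (1 - r + m) by rewrite mulr_ge0 //; lra.
rewrite -(ger0_norm lhs0) -sqrtr_sqr ler_sqrt; last first.
  by rewrite addr_ge0 ?sqr_ge0 // !mulr_ge0.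
move: (cos 1) (1 - cos t) c1_gt0 C_le1 k0 => c k c0 c_le1 k0 k_ge.
have -> : (c / 10 * (1 - r + m)) ^+ 2 = c ^+ 2 / 100 * (1 - r + m) ^+ 2 by field.
have sum_sqr : (1 - r + m) ^+ 2 <= 2 * ((1 - r) ^+ 2 + m ^+ 2).
  by have := sqr_ge0 (1 - r - m); nra.
have [r_ge|r_lt] := leP (1 / 2) r; last first.
  have : (1 - r + m) ^+ 2 <= 5 ^+ 2 by rewrite ler_pXn2r ?nnegrE //; lra.
  nra.
have c2_0 : 0 <= c ^+ 2 := sqr_ge0 c.
have h1 : c ^+ 2 * (1 - r + m) ^+ 2 <= c ^+ 2 * (2 * ((1 - r) ^+ 2 + m ^+ 2)).
  exact: ler_wpM2l.
have h2 : c ^+ 2 * (1 - r) ^+ 2 <= (1 - r) ^+ 2 by rewrite ler_piMl ?sqr_ge0.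
have h3 : k <= 2 * r * k by rewrite ler_peMl //; lra.
nra.
Qed.

End modulus.

Lemma Mp_le_of_poweR_le {R : realType} {p r s e A : R} {F : R[i] -> \bar R} :
  0 < p -> 0 < s -> e < -1 -> 0 <= A ->
  (forall t, 0 <= t <= pi *+ 2 ->
     (poweR (F (polar r t)) p <= (A * ((s + t) `^ e + (s + pi *+ 2 - t) `^ e))%:E)%E) ->
  (Mp p r F <= ((A * (2 / - (e + 1)) / (pi *+ 2)) `^ p^-1 * s `^ ((e + 1) / p))%:E)%E.
Proof.
move=> p0 s0 e1 A0 hF.
have pi2 : 0 < pi *+ 2 :> R by rewrite mulrn_wgt0 // pi_gt0.
have k0 : 0 <= A * (2 / - (e + 1)) / (pi *+ 2).
  by rewrite divr_ge0 ?(ltW pi2) // mulr_ge0 // divr_ge0 // oppr_ge0; lra.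
rewrite /Mp; set I := (\int[_]_(t in _) _)%E.
have I0 : (0 <= I)%E by apply: integral_ge0 => t _; exact: poweR_ge0.
have I_le : (I <= (A * (2 / - (e + 1)) * s `^ (e + 1))%:E)%E.
  apply: le_trans (integral_powR_pair_le _ _ _ _ A0 s0 pi2 e1).
  apply: ge0_le_integral_nomeas => t /= t02; first exact: poweR_ge0.
  by apply: hF; move: t02; rewrite in_itv.
have mean_le : ((pi *+ 2)^-1%:E * I <= (A * (2 / - (e + 1)) / (pi *+ 2) * s `^ (e + 1))%:E)%E.
  apply: le_trans (lee_wpmul2l _ I_le) _; first by rewrite lee_fin invr_ge0 ltW.
  by rewrite -EFinM lee_fin le_eqVlt; apply/predU1P; left; ring.
apply: le_trans (gt0_ler_poweR _ _ _ mean_le) _.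
- by rewrite invr_ge0 ltW.
- by rewrite in_itv /= leey andbT mule_ge0 // lee_fin invr_ge0 ltW.
- by rewrite in_itv /= leey andbT lee_fin mulr_ge0 ?powR_ge0.
by rewrite poweR_EFin lee_fin powRM ?powR_ge0 // -powRrM.
Qed.

Section Fsum_estimates.
Context {R : realType} {K nu beta : R}.
Local Open Scope complex_scope.
Hypotheses (K1 : 1 < K) (nu0 : 0 < nu) (theta_lt0 : nu + beta < 0).

Lemma Fsum_polar_le r t : 0 <= r < 1 ->
  (Fsum K nu beta (polar r t) <=
   (lacunary_const K nu beta * cabs (1 - polar r t) `^ (nu + beta))%:E)%E.
Proof.
move=> /andP[r0 r1]; set U := cabs _.
have U0 : 0 < U.
  rewrite /U cabs_1_sub_polar sqrtr_gt0 ltr_pwDl ?exprn_gt0 ?subr_gt0 //.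
  by rewrite !mulr_ge0 // subr_ge0 cos_le1.
have beta0 : beta <= 0 by move: nu0 theta_lt0; lra.
rewrite /Fsum; apply: nneseries_le_bound => [n|N]; first exact: cabs_ge0.
apply: le_trans (lacunary_sum_le K U nu beta K1 U0 nu0 theta_lt0 N).
apply: ler_sum => n _; rewrite cabs_fn /lacunary_term /delta.
have d0 : 0 < K ^- n by rewrite invr_gt0 exprn_gt0 // (lt_trans ltr01 K1).
have M0 : 0 < Num.max (K ^- n) U by rewrite lt_max d0.
have max_le : Num.max (K ^- n) U <= cabs (1 + (K ^- n)%:C - polar r t).
  by apply: cabs_1_addC_sub_polar; [exact: ltW | rewrite r0 ltW].
rewrite ler_wpM2l ?powR_ge0 // /powR (gt_eqF M0) ler_expR ler_wnM2l //.
by rewrite ler_ln ?posrE // (lt_le_trans M0 max_le).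
Qed.

Lemma poweR_Fsum_polar_le p r : 0 < p -> 0 <= r < 1 ->
  forall t, 0 <= t <= pi *+ 2 ->
  (poweR (Fsum K nu beta (polar r t)) p <=
   (lacunary_const K nu beta `^ p * (cos 1 / 10) `^ ((nu + beta) * p) *
    ((1 - r + t) `^ ((nu + beta) * p) + (1 - r + pi *+ 2 - t) `^ ((nu + beta) * p)))%:E)%E.
Proof.
move=> p0 r01 t t02; set e := (nu + beta) * p.
have C0 := ltW (lacunary_const_gt0 _ _ _ K1 nu0 theta_lt0).
apply: le_trans (gt0_ler_poweR (ltW p0) _ _ (Fsum_polar_le _ _ r01)) _.
- by rewrite in_itv /= leey andbT nneseries_ge0 // => n _; rewrite lee_fin cabs_ge0.
- by rewrite in_itv /= leey andbT lee_fin mulr_ge0 ?powR_ge0.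
rewrite poweR_EFin lee_fin [leLHS]powRM ?powR_ge0 // -powRrM -/e -mulrA ler_wpM2l ?powR_ge0 //.
have := cabs_1_sub_polar_ge _ _ r01 t02; set m := Num.min _ _ => lower.
have m0 : 0 <= m by rewrite le_min; case/andP: t02 => t0 t2; rewrite t0 subr_ge0.
have s_pos : 0 < 1 - r by case/andP: r01 => _; rewrite subr_gt0.
have c_pos : 0 < cos 1 / 10 :> R by rewrite divr_gt0 ?cos1_gt0.
have e_le0 : 0 <= - e by rewrite oppr_ge0; apply: mulr_le0_ge0; apply: ltW.
apply: le_trans (_ : (cos 1 / 10 * (1 - r + m)) `^ e <= _).
  by rewrite -[e]opprK; apply: ler_powRN; rewrite // mulr_gt0 // ltr_wpDr.
have sm0 : 0 <= 1 - r + m by rewrite addr_ge0 // ltW.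
rewrite powRM ?(ltW c_pos) // ler_wpM2l ?powR_ge0 //.
by rewrite /m; case: (leP t _) => _; rewrite ?addrA (lerDl, lerDr) powR_ge0.
Qed.

End Fsum_estimates.

Theorem lemma6p6 (R : realType) (p alpha beta : R) :
  0 < p -> 0 < alpha -> beta * p < -1 -> 0 < - (alpha + beta + p^-1) ->
  exists K0 : R, 1 < K0 /\
    forall K : R, K0 < K ->
      exists C : R, forall r : R, 0 <= r -> r < 1 ->
        (((1 - r) `^ alpha)%:E
           * Mp p r (Fsum K (- (alpha + beta + p^-1)) beta) <= C%:E)%E.
Proof.
(* [beta * p < -1] follows from [0 < alpha] and [0 < nu]; any [K > 1] works. *)
move=> p0 alpha0 _ nu0; set nu := - _ in nu0 *.
have theta_eq : nu + beta = - (alpha + p^-1) by rewrite /nu; ring.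
have theta_lt0 : nu + beta < 0 by rewrite theta_eq oppr_lt0 addr_gt0 ?invr_gt0.
have e_eq : (nu + beta) * p + 1 = - (alpha * p).
  by rewrite theta_eq mulNr mulrDl mulVf ?gt_eqF //; ring.
have e_lt : (nu + beta) * p < -1 by have := mulr_gt0 alpha0 p0; lra.
exists 2; split => [|K K2]; first lra.
have K1 : 1 < K by lra.
set A := lacunary_const K nu beta `^ p * (cos 1 / 10) `^ ((nu + beta) * p).
have A0 : 0 <= A by rewrite mulr_ge0 ?powR_ge0.
exists ((A * (2 / - ((nu + beta) * p + 1)) / (pi *+ 2)) `^ p^-1) => r r0 r1.
have s0 : 0 < 1 - r by rewrite subr_gt0.
have r01 : 0 <= r < 1 by rewrite r0 r1.
have := Mp_le_of_poweR_le p0 s0 e_lt A0 (poweR_Fsum_polar_le K1 nu0 theta_lt0 _ _ p0 r01).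
rewrite e_eq mulNr mulfK ?gt_eqF // => Mp_le.
apply: le_trans (lee_wpmul2l _ Mp_le) _; first by rewrite lee_fin powR_ge0.
by rewrite -EFinM lee_fin mulrCA powRN mulfV ?mulr1 // gt_eqF // powR_gt0.
Qed.
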